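(* Let $(S,E,I,R^{\mathrm T},R^{\mathrm P},D)$ be a solution of the SEIR$^{\mathrm T}$R$^{\mathrm P}$D system with distributed delays described in the context, where $\gamma\ge 0$, $\mu\ge 0$, $p\in[0,1]$ are constants and $\beta(t)\ge 0$ for all $t$. Assume the history data $S(s)=c_S>0$ and $I(s)=c_I>0$ for all $s\le 0$, and the initial data $E(0)=\beta_0 c_I c_S\int_\theta^L \Psi(\tau)\tau\,d\tau$, $R^{\mathrm T}(0)=c_I p\gamma\int_\epsilon^M\Phi(\rho)\rho\,d\rho$, $R^{\mathrm P}(0)=(1-p)\gamma c_I\int_\theta^L\Psi(\tau)\tau\,d\tau$. Then $S(t)$, $E(t)$, $I(t)$, $R^{\mathrm T}(t)$ and $R^{\mathrm P}(t)$ are non-negative for all $t>0$.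
   Context: The system is $S'(t)=-\beta(t)I(t)S(t)+p\gamma\int_{0}^{\infty}I(t-\rho)\Phi(\rho)\,d\rho$, $E'(t)=\beta(t)I(t)S(t)-\int_{0}^{\infty}\beta(t-\tau)I(t-\tau)S(t-\tau)\Psi(\tau)\,d\tau$, $I'(t)=\int_{0}^{\infty}\beta(t-\tau)I(t-\tau)S(t-\tau)\Psi(\tau)\,d\tau-\gamma I(t)-\mu I(t)$, $R^{\mathrm T\prime}(t)=p\gamma I(t)-p\gamma\int_{0}^{\infty}I(t-\rho)\Phi(\rho)\,d\rho$, $R^{\mathrm P\prime}(t)=(1-p)\gamma I(t)$, $D'(t)=\mu I(t)$, for $t>0$. Here $\Psi,\Phi$ are non-negative Lebesgue integrable probability densities on $[0,\infty)$ ($\int\Psi=\int\Phi=1$) with $\operatorname{supp}\Psi\subset[\theta,L]$ for some $0<\theta<L<\infty$ and $\operatorname{supp}\Phi\subset[\epsilon,M]$ for some $0<\epsilon<M<\infty$. The contact rate $\beta$ is a non-negative smooth function on $\mathbb R$, and $\beta_0$ denotes its (constant) value on the history interval, i.e. $\beta(s)=\beta_0$ for $s\le 0$. $S$ and $I$ are continuous on $\mathbb R$ (given by the history data for $s\le 0$). *)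

From HB Require Import structures.
From mathcomp Require Import all_boot all_order all_algebra.
From mathcomp Require Import all_classical all_reals all_analysis.
Set Implicit Arguments. Unset Strict Implicit. Unset Printing Implicit Defensive.
Import Order.TTheory GRing.Theory Num.Theory.
Import numFieldNormedType.Exports.
Local Open Scope classical_set_scope.
Local Open Scope ring_scope.

Definition smooth {R : realType} (f : R -> R) : Prop :=
  forall (n : nat) (x : R), derivable (iter n (fun g : R -> R => derive1 g) f) x 1.

Definition LInt {R : realType} (D : set R) (f : R -> R) : R :=
  Rintegral (@lebesgue_measure R) D f.

Definition density_supp {R : realType} (f : R -> R) (a b : R) : Prop :=
  [/\ 0 < a /\ a < b,
      (forall x, 0 <= f x),
      (@lebesgue_measure R).-integrable `[0, +oo[%classic (EFin \o f),
      LInt `[0, +oo[%classic f = 1 &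
      (forall x, f x != 0 -> a <= x <= b)].

From HB Require Import structures.
From mathcomp Require Import all_boot all_order all_algebra.
From mathcomp Require Import all_classical all_reals all_analysis.
From mathcomp Require Import measurable_realfun lebesgue_integral_under.
From mathcomp Require Import ring lra.
Import Order.TTheory GRing.Theory Num.Theory.
Import numFieldNormedType.Exports.
Local Open Scope classical_set_scope.
Local Open Scope ring_scope.

(* S and I stay positive: up to a first zero T all delayed integrals are
   nonnegative, so S' >= -K S and I' >= -(gamma + mu) I on [0, T], and a
   Grönwall argument keeps S T and I T positive.  For E and R^T, with P a
   primitive of the inflow, the compartment holds the inflow of the last tau
   time units averaged over the delay density, int (P t - P (t - tau)) Psi tau,
   which is nonnegative; the prescribed initial values are exactly this average
   at t = 0.  Finally R^P is nondecreasing. *)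

Section Calculus.
Context {R : realType}.

Lemma is_derive_continuous (f : R -> R) (x df : R) :
  is_derive x 1 f df -> {for x, continuous f}.
Proof.
by case=> fx _; apply: differentiable_continuous; apply/derivable1_diffP.
Qed.

Lemma is_derive_ext (f g : R -> R) (x df dg : R) :
  f =1 g -> df = dg -> is_derive x 1 f df -> is_derive x 1 g dg.
Proof. by move=> /funext -> ->. Qed.

Lemma continuous_subl (P : R -> R) (z : R) : continuous P ->
  continuous (fun y => P (z - y)).
Proof.
move=> cP y; apply: (@continuous_comp _ _ _ (fun w => z - w) P); last exact: cP.
by apply: continuousB; [exact: cvg_cst | exact: cvg_id].
Qed.

Lemma continuous_bounded_itv (h : R -> R) (a b : R) : continuous h ->
  exists K, forall x, a <= x <= b -> `|h x| <= K.
Proof.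
move=> hc.
have cc : compact [set h x | x in `[a, b]] :=
  continuous_compact (continuous_subspaceT hc) (@segment_compact _ a b).
have [M [_ HM]] := compact_bounded cc.
exists (`|M| + 1) => x xab.
apply: (HM (`|M| + 1)); first by rewrite (le_lt_trans (ler_norm M)) // ltrDl.
by exists x => //=; rewrite in_itv.
Qed.

Lemma ge0_is_derive_le (f df : R -> R) (a b : R) : a < b ->
  (forall x, a < x < b -> is_derive x 1 f (df x)) ->
  (forall x, a < x < b -> 0 <= df x) ->
  {within `[a, b], continuous f} -> f a <= f b.
Proof.
move=> ab fd df_ge0 cf.
have fd' x : x \in `]a, b[ -> is_derive x 1 f (df x) by rewrite in_itv => /fd.
have [c c_ab eq] := MVT ab fd' cf.
rewrite -subr_ge0 eq mulr_ge0 ?subr_ge0 ?(ltW ab) //.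
by apply: df_ge0; move: c_ab; rewrite in_itv.
Qed.

Lemma is_derive0_itv_eq (f : R -> R) (a b : R) : a < b ->
  (forall x, a < x < b -> is_derive x 1 f 0) ->
  {within `[a, b], continuous f} -> f b = f a.
Proof.
move=> ab fd cf.
have fd' x : x \in `]a, b[ -> is_derive x 1 f ((fun=> 0) x).
  by rewrite in_itv => /fd.
have [c _ eq] := MVT ab fd' cf.
by apply/eqP; rewrite -subr_eq0 eq mul0r.
Qed.

Lemma is_derive_expRM (k x : R) :
  is_derive x 1 (fun x => expR (k * x)) (expR (k * x) * k).
Proof.
have kx : is_derive x 1 (fun x : R => k * x) k.
  have := is_deriveZ k (is_derive_id x 1).
  by apply: is_derive_ext => [y|]; rewrite /GRing.scale /= ?mulr1.
exact: is_derive1_comp.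
Qed.

Lemma is_derive_ge0_ge0 {f df : R -> R} {t : R} : 0 < t ->
  {within `[0, +oo[, continuous f} ->
  (forall x : R, 0 < x -> is_derive x 1 f (df x)) -> (forall x, 0 < x -> 0 <= df x) ->
  0 <= f 0 -> 0 <= f t.
Proof.
move=> t0 cf fd df_ge0 f0; apply: le_trans f0 _.
apply: (@ge0_is_derive_le f df 0 t t0) => [x /andP[x0 _] | x /andP[x0 _] |].
- exact: fd.
- exact: df_ge0.
by apply: continuous_subspaceW cf => y; rewrite /= !in_itv /= => /andP[->].
Qed.

(* Grönwall: f' >= -K f makes [f x * expR (K x)] nondecreasing. *)
Lemma gronwall_gt0 (f df : R -> R) (K T : R) : 0 < T -> continuous f ->
  (forall x, 0 < x < T -> is_derive x 1 f (df x)) ->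
  (forall x, 0 < x < T -> - K * f x <= df x) ->
  0 < f 0 -> 0 < f T.
Proof.
move=> T0 cf fd df_ge f0.
pose g x := f x * expR (K * x).
have gd x : 0 < x < T -> is_derive x 1 g (expR (K * x) * (df x + K * f x)).
  move=> xT; apply: is_derive_ext (is_deriveM (fd x xT) (is_derive_expRM K x)) => //.
  rewrite /GRing.scale /=; ring.
have cg : continuous g.
  move=> x; apply: (@continuousM _ _ f (fun y => expR (K * y)) x (cf x)).
  exact: is_derive_continuous (is_derive_expRM K x).
have g_le : g 0 <= g T.
  apply: (@ge0_is_derive_le g _ 0 T T0 gd _ (continuous_subspaceT cg)) => x xT.
  by rewrite mulr_ge0 ?expR_ge0 //; have := df_ge x xT; lra.
rewrite /g mulr0 expR0 mulr1 in g_le.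
by rewrite -(pmulr_lgt0 _ (expR_gt0 (K * T))) (lt_le_trans f0 g_le).
Qed.

Lemma continuous_gt0_induction (f : R -> R) : continuous f ->
  (forall s, s <= 0 -> 0 < f s) ->
  (forall T, 0 < T -> (forall s, s < T -> 0 < f s) -> 0 < f T) ->
  forall t, 0 < f t.
Proof.
move=> cf f_hist f_step t; rewrite ltNge; apply/negP => ft.
pose A := [set s | f s <= 0].
have A_gt0 s : A s -> 0 < s.
  by move=> As; rewrite ltNge; apply/negP => /f_hist; rewrite ltNge As.
have A_inf : has_inf A by split; [exists t | exists 0 => s /A_gt0/ltW].
have A_ge_inf s : A s -> inf A <= s by apply: ge_inf; case: A_inf.
have below s : s < inf A -> 0 < f s.
  by move=> sT; rewrite ltNge; apply/negP => /A_ge_inf; rewrite leNgt sT.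
have fT : 0 < f (inf A).
  have [T0|T0] := leP (inf A) 0; [exact: f_hist | exact: f_step].
have : \forall z \near inf A, 0 < f z.
  by near=> z; near: z; exact: (cvgr_gt _ (cf (inf A)) 0 fT).
move=> /nbhs_ballP[d /= d0 hd].
have [s As sT] := inf_adherent d0 A_inf.
have := hd s; rewrite -ball_normE /= distrC ger0_norm ?subr_ge0 ?A_ge_inf //.
rewrite ltrBlDl.
by move=> /(_ sT); rewrite ltNge As.
Unshelve. all: by end_near.
Qed.

End Calculus.

Section DelayIntegrals.
Context {R : realType}.
Local Notation mu := (@lebesgue_measure R).

Lemma Rintegral_density_supp (h : R -> R) {Psi : R -> R} {a b : R} : density_supp Psi a b ->
  LInt `[0, +oo[ (fun y => h y * Psi y) = LInt `[a, b] (fun y => h y * Psi y).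
Proof.
case=> [[a0 ab] _ _ _ Psi_supp].
rewrite /LInt [LHS]Rintegral_mkcond [RHS]Rintegral_mkcond.
apply: eq_Rintegral => y _; rewrite !patchE.
have [->|/Psi_supp/andP[ay yb]] := eqVneq (Psi y) 0.
  by rewrite mulr0; case: (y \in _); case: (y \in _).
rewrite mem_set; last by rewrite /= in_itv /= (le_trans (ltW a0) ay).
by rewrite mem_set //= in_itv /= ay yb.
Qed.

Lemma density_supp_integrable {Psi : R -> R} {a b : R} : density_supp Psi a b ->
  mu.-integrable `[a, b] (EFin \o Psi).
Proof.
case=> [[a0 _] _ Psi_int _ _]; apply: integrableS Psi_int => //.
by move=> y; rewrite /= !in_itv /= => /andP[ay _]; rewrite (le_trans (ltW a0) ay).
Qed.

Lemma Rintegral_density_supp_itv {Psi : R -> R} {a b : R} : density_supp Psi a b ->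
  LInt `[a, b] Psi = 1.
Proof.
move=> Psi_supp; case: (Psi_supp) => _ _ _ <- _.
have one_mul D : LInt D (fun y => 1 * Psi y) = LInt D Psi.
  by apply: eq_Rintegral => y _; rewrite mul1r.
by rewrite -one_mul -[RHS]one_mul (Rintegral_density_supp _ Psi_supp).
Qed.

Lemma integrableM_continuous {h Psi : R -> R} {a b : R} :
  mu.-integrable `[a, b] (EFin \o Psi) -> continuous h ->
  mu.-integrable `[a, b] (EFin \o (fun y => h y * Psi y)).
Proof.
move=> Psi_int ch.
have -> : EFin \o (fun y => h y * Psi y) = (fun y => (h y)%:E * (Psi y)%:E)%E.
  by apply/funext => y; rewrite /= EFinM.
apply: integrableMr => //; first exact: measurable_funS (continuous_measurable_fun ch).
have [K hK] := continuous_bounded_itv _ a b ch.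
exists K; split; first exact: num_real.
move=> M KM x; rewrite /= in_itv /= => /hK/le_trans; apply; exact: ltW.
Qed.

Lemma delay_Rintegral_ge0 (h Psi : R -> R) (x : R) : (forall y, 0 <= Psi y) ->
  (forall s, s <= x -> 0 <= h s) ->
  0 <= LInt `[0, +oo[ (fun tau => h (x - tau) * Psi tau).
Proof.
move=> Psi_ge0 h_ge0; apply: Rintegral_ge0 => tau /=; rewrite in_itv /= => /andP[tau0 _].
by rewrite mulr_ge0 // h_ge0 // lerBlDr lerDl.
Qed.

(* Differentiation under the integral sign, dominated by [sup |f| * Psi]. *)
Lemma is_derive_Rintegral_shift (P f Psi : R -> R) (a b x : R) :
  (forall z : R, is_derive z 1 P (f z)) -> continuous f ->
  mu.-integrable `[a, b] (EFin \o Psi) -> (forall y, 0 <= Psi y) ->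
  is_derive x 1 (fun x => LInt `[a, b] (fun y => P (x - y) * Psi y))
    (LInt `[a, b] (fun y => f (x - y) * Psi y)).
Proof.
move=> Pd cf Psi_int Psi_ge0.
pose g z y := P (z - y) * Psi y.
have gd (z y : R) : is_derive z 1 (g^~ y) (f (z - y) * Psi y).
  have zy : is_derive z 1 (fun z => z - y) 1.
    have := is_deriveB (is_derive_id z 1) (is_derive_cst y z 1).
    by apply: is_derive_ext => [w|]; rewrite ?subr0.
  have := is_deriveZ (Psi y) (@is_derive1_comp _ P (fun w => w - y) z _ _ (Pd (z - y)) zy).
  by apply: is_derive_ext => [w|]; [exact: mulrC | rewrite mulr1 mulrC].
have g_int (z : R) : `](x - 1), (x + 1)[%classic z -> mu.-integrable `[a, b] (EFin \o g z).
  move=> _; apply: integrableM_continuous => //; apply: continuous_subl => w.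
  exact: is_derive_continuous (Pd w).
have [K hK] := continuous_bounded_itv _ (x - 1 - b) (x + 1 - a) cf.
have xI : `](x - 1), (x + 1)[%classic x by rewrite /= in_itv /=; apply/andP; lra.
have mB := @measurable_itv R `[a, b].
have G_int : mu.-integrable `[a, b] (EFin \o (fun y => `|K| * Psi y)).
  have := @integrableZl _ _ _ mu _ mB `|K| _ Psi_int.
  apply: (@eq_integrable _ _ _ mu _ mB) => y _.
  by rewrite /= EFinM.
have d1g (z y : R) : partial1of2 g z y = f (z - y) * Psi y by rewrite partial1of2E; case: (gd z y).
have g_dom (z y : R) : `](x - 1), (x + 1)[%classic z -> `[a, b]%classic y ->
    `|partial1of2 g z y| <= `|K| * Psi y.
  rewrite /= !in_itv /= => /andP[z1 z2] /andP[y1 y2].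
  rewrite d1g normrM (ger0_norm (Psi_ge0 y)) ler_wpM2r //.
  by apply: le_trans (ler_norm K); apply: hK; apply/andP; split; lra.
have g_dvb (z y : R) : `](x - 1), (x + 1)[%classic z -> `[a, b]%classic y ->
    derivable (g^~ y) z 1.
  by move=> _ _; case: (gd z y).
have G_ge0 y : 0 <= `|K| * Psi y by rewrite mulr_ge0.
apply: DeriveDef.
  exact: (derivable_under_integral (mu := mu) mB xI g_int g_dvb G_ge0 G_int g_dom).
rewrite -derive1E.
rewrite (differentiation_under_integral (mu := mu) mB xI g_int g_dvb G_ge0 G_int g_dom).
by apply: eq_Rintegral => y _; rewrite d1g.
Qed.

End DelayIntegrals.

Section HistoryPrimitive.
Context {R : realType}.
Variables (F : R -> R) (F0 : R).
Hypotheses (cF : continuous F) (F_hist : forall s, s <= 0 -> F s = F0).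

(* The lower limit [-1] only has to lie strictly below [0], so that FTC
   applies at [0]. *)
Definition hist_primitive (x : R) : R := F0 * x + LInt `[-1, x] (fun s => F s - F0).

Lemma hist_Rintegral_le0 (x : R) : x <= 0 -> LInt `[-1, x] (fun s => F s - F0) = 0.
Proof.
move=> x0; rewrite /LInt (@eq_Rintegral _ _ _ _ _ (fun=> 0)) ?Rintegral_cst ?mul0r //.
by move=> s; rewrite inE /= in_itv /= => /andP[_ sx]; rewrite F_hist ?subrr ?(le_trans sx).
Qed.

Lemma hist_primitive_le0 (x : R) : x <= 0 -> hist_primitive x = F0 * x.
Proof. by move=> x0; rewrite /hist_primitive hist_Rintegral_le0 ?addr0. Qed.

Lemma is_derive_hist_primitive (x : R) : is_derive x 1 hist_primitive (F x).
Proof.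
suff dI : is_derive x 1 (fun x => LInt `[-1, x] (fun s => F s - F0)) (F x - F0).
  have := is_deriveD (is_deriveZ F0 (is_derive_id x 1)) dI.
  by apply: is_derive_ext => [y|] //; rewrite /GRing.scale /= mulr1 addrC subrK.
have [x0|x_ge0] := ltP x 0.
  rewrite F_hist ?(ltW x0) // subrr.
  apply: (@near_eq_is_derive _ _ _ (cst 0)).
  near=> z; rewrite hist_Rintegral_le0 //; apply: ltW; near: z; exact: lt_nbhsl.
have cG : continuous (fun s => F s - F0).
  by move=> y; apply: continuousB; [exact: cF | exact: cvg_cst].
have G_int : (@lebesgue_measure R).-integrable `[-1, x + 1] (EFin \o (fun s => F s - F0)).
  apply: continuous_compact_integrable; first exact: segment_compact.
  exact: continuous_subspaceT.
have xx1 : x < x + 1 by rewrite ltrDl.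
have [dvb dval] := continuous_FTC1_closed xx1 G_int (lt_le_trans (ltrN10 R) x_ge0) (cG x).
by apply: DeriveDef; [exact: dvb | rewrite -derive1E dval].
Unshelve. all: by end_near.
Qed.

Lemma continuous_hist_primitive : continuous hist_primitive.
Proof. by move=> x; apply: is_derive_continuous (is_derive_hist_primitive x). Qed.

End HistoryPrimitive.

Section DelayGap.
Context {R : realType}.
Local Notation mu := (@lebesgue_measure R).
Variables (F Psi : R -> R) (a b F0 : R).
Hypotheses (Psi_supp : density_supp Psi a b) (cF : continuous F)
  (F_hist : forall s, s <= 0 -> F s = F0).
Local Notation P := (hist_primitive F F0).

(* The inflow [F] accumulated over the last [y] time units, averaged against
   the delay density: the stock of individuals still waiting in the compartment. *)
Definition delay_gap (t : R) : R := LInt `[a, b] (fun y => (P t - P (t - y)) * Psi y).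

Let Psi_int := density_supp_integrable Psi_supp.
Let Psi_ge0 : forall y, 0 <= Psi y. Proof. by case: Psi_supp. Qed.
Let mB := @measurable_itv R `[a, b].

Lemma delay_gap_ge0 (t : R) : (forall s, 0 <= F s) -> 0 <= delay_gap t.
Proof.
move=> F_ge0; apply: Rintegral_ge0 => y /=; rewrite in_itv /= => /andP[ay _].
rewrite mulr_ge0 // subr_ge0.
have a0 : 0 < a by case: Psi_supp => -[].
have ty : t - y < t by rewrite ltrBlDr ltrDl (lt_le_trans a0 ay).
apply: (@ge0_is_derive_le _ P F _ _ ty) => [x _ | x _ |].
- exact: is_derive_hist_primitive.
- exact: F_ge0.
exact/continuous_subspaceT/continuous_hist_primitive.
Qed.

Lemma delay_gap0 : delay_gap 0 = F0 * LInt `[a, b] (fun tau => Psi tau * tau).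
Proof.
have a0 : 0 < a by case: Psi_supp => -[].
have Psiy_int : mu.-integrable `[a, b] (EFin \o (fun y => Psi y * y)).
  have := integrableM_continuous Psi_int (fun y => @cvg_id _ (nbhs y)).
  by apply: (@eq_integrable _ _ _ mu _ mB) => y _; rewrite /= mulrC.
rewrite /LInt -(RintegralZl (mu := mu) _ mB Psiy_int); apply: eq_Rintegral => y.
rewrite inE /= in_itv /= => /andP[ay _].
rewrite hist_primitive_le0 // hist_primitive_le0 ?sub0r ?oppr_le0 ?(le_trans (ltW a0)) //.
by ring.
Qed.

Lemma is_derive_delay_gap (t : R) : is_derive t 1 delay_gap
  (F t - LInt `[0, +oo[ (fun tau => F (t - tau) * Psi tau)).
Proof.
have P_shift_int x : mu.-integrable `[a, b] (EFin \o (fun y => P (x - y) * Psi y)).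
  by apply: integrableM_continuous => //; exact/continuous_subl/continuous_hist_primitive.
have P_cst_int x : mu.-integrable `[a, b] (EFin \o (fun y => P x * Psi y)).
  exact: integrableM_continuous Psi_int (fun y => cvg_cst _).
have gapE : delay_gap = fun x => P x - LInt `[a, b] (fun y => P (x - y) * Psi y).
  apply/funext => x; rewrite /delay_gap /LInt.
  under eq_Rintegral do rewrite mulrBl.
  rewrite (RintegralB (mu := mu) mB (P_cst_int x) (P_shift_int x)).
  rewrite (RintegralZl (mu := mu) _ mB Psi_int).
  by have := Rintegral_density_supp_itv Psi_supp; rewrite /LInt => ->; rewrite mulr1.
rewrite gapE (Rintegral_density_supp _ Psi_supp).
apply: is_deriveB; first exact: is_derive_hist_primitive.
by apply: is_derive_Rintegral_shift => //; exact: is_derive_hist_primitive.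
Qed.

End DelayGap.

Section Positivity.
Context {R : realType}.

(* A compartment fed by [c * F] and emptied by the same flow delayed by the
   density [Psi] holds exactly [c * delay_gap], once its initial value matches. *)
Lemma delay_compartment_ge0 {F Psi X : R -> R} {a b F0 c : R} :
  density_supp Psi a b -> continuous F -> (forall s, 0 <= F s) ->
  (forall s, s <= 0 -> F s = F0) -> 0 <= c ->
  {within `[0, +oo[, continuous X} ->
  X 0 = c * F0 * LInt `[a, b] (fun tau => Psi tau * tau) ->
  (forall t : R, 0 < t -> is_derive t 1 X
     (c * (F t - LInt `[0, +oo[ (fun tau => F (t - tau) * Psi tau)))) ->
  forall t : R, 0 < t -> 0 <= X t.
Proof.
move=> Psi_supp cF F_ge0 F_hist c0 cX X0 Xd t t0.
pose G x := c * delay_gap F Psi a b F0 x.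
have Gd (x : R) : is_derive x 1 G
    (c * (F x - LInt `[0, +oo[ (fun tau => F (x - tau) * Psi tau))).
  exact/is_deriveZ/is_derive_delay_gap.
suff -> : X t = G t by rewrite mulr_ge0 // delay_gap_ge0.
pose H x := X x - G x.
have : H t = H 0.
  apply: (@is_derive0_itv_eq _ H 0 t t0) => [x /andP[x0 _] | ].
    by apply: is_derive_ext (is_deriveB (Xd x x0) (Gd x)) => //; rewrite subrr.
  have cG : continuous G by move=> x; apply: is_derive_continuous (Gd x).
  have sub : `[0, t] `<=` `[0, +oo[ by move=> y; rewrite /= !in_itv /= => /andP[->].
  move=> z; apply: continuousB; first exact: (continuous_subspaceW sub cX).
  exact: (continuous_subspaceT cG).
by rewrite /H /G delay_gap0 // X0 mulrA subrr => /eqP; rewrite subr_eq0 => /eqP.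
Qed.

Lemma susceptible_infected_gt0 {Psi Phi beta S I : R -> R}
    {gamma mu p cS cI : R} :
  (forall y, 0 <= Psi y) -> (forall y, 0 <= Phi y) -> continuous beta ->
  (forall t, 0 <= beta t) -> 0 <= gamma -> 0 <= p ->
  0 < cS -> 0 < cI ->
  (forall s, s <= 0 -> S s = cS) -> (forall s, s <= 0 -> I s = cI) ->
  continuous S -> continuous I ->
  (forall t : R, 0 < t -> is_derive t 1 S
      (- beta t * I t * S t
       + p * gamma * LInt `[0, +oo[ (fun rho => I (t - rho) * Phi rho))) ->
  (forall t : R, 0 < t -> is_derive t 1 I
      (LInt `[0, +oo[ (fun tau => beta (t - tau) * I (t - tau) * S (t - tau) * Psi tau)
       - gamma * I t - mu * I t)) ->
  forall t, 0 < S t /\ 0 < I t.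
Proof.
move=> Psi_ge0 Phi_ge0 cb b_ge0 g0 p0 cS0 cI0 S_hist I_hist cSc cIc Sd Id.
suff SI t : 0 < (S \min I) t by move=> t; have := SI t; rewrite /= lt_min => /andP.
apply: continuous_gt0_induction => [x | s s0 | T T0 SI_lt].
- exact: (@continuous_min _ _ S I x (cSc x) (cIc x)).
- by rewrite /= S_hist // I_hist // lt_min cS0 cI0.
have {}SI_lt s : s < T -> 0 < S s /\ 0 < I s by move/SI_lt; rewrite /= lt_min => /andP.
have J_ge0 x : x < T -> 0 <= LInt `[0, +oo[
    (fun tau => beta (x - tau) * I (x - tau) * S (x - tau) * Psi tau).
  move=> xT; apply: (delay_Rintegral_ge0 (fun s => beta s * I s * S s)) => // s sx.
  by have [/ltW Ss /ltW Is] := SI_lt s (le_lt_trans sx xT); rewrite !mulr_ge0.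
have L_ge0 x : x < T -> 0 <= LInt `[0, +oo[ (fun rho => I (x - rho) * Phi rho).
  move=> xT; apply: delay_Rintegral_ge0 => // s sx.
  by have [_ /ltW] := SI_lt s (le_lt_trans sx xT).
rewrite /= lt_min; apply/andP; split.
- have cbI : continuous (fun x => beta x * I x).
    by move=> x; apply: (@continuousM _ _ beta I x (cb x) (cIc x)).
  have [K bI_le] := continuous_bounded_itv _ 0 T cbI.
  apply: (@gronwall_gt0 _ S _ K T T0 cSc) => [x /andP[x0 _] | x /andP[x0 xT] |].
  + exact: Sd.
  + have bIK : beta x * I x <= K.
      by apply: le_trans (ler_norm _) (bI_le x _); rewrite (ltW x0) (ltW xT).
    have [/ltW Sx _] := SI_lt x xT.
    have := mulr_ge0 (mulr_ge0 p0 g0) (L_ge0 x xT); nra.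
  + by rewrite S_hist.
- apply: (@gronwall_gt0 _ I _ (gamma + mu) T T0 cIc) => [x /andP[x0 _] | x /andP[_ xT] |].
  + exact: Id.
  + have := J_ge0 x xT; lra.
  + by rewrite I_hist.
Qed.

End Positivity.

Theorem theorem1 (R : realType)
  (Psi Phi beta : R -> R) (theta L eps M beta0 gamma mu p cS cI : R)
  (S E I RT RP D : R -> R) :
  density_supp Psi theta L ->
  density_supp Phi eps M ->
  smooth beta ->
  (forall t : R, 0 <= beta t) ->
  (forall s : R, s <= 0 -> beta s = beta0) ->
  0 <= gamma -> 0 <= mu -> 0 <= p -> p <= 1 ->
  0 < cS -> 0 < cI ->
  (forall s : R, s <= 0 -> S s = cS) ->
  (forall s : R, s <= 0 -> I s = cI) ->
  continuous S -> continuous I ->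
  {within `[0, +oo[%classic, continuous E} ->
  {within `[0, +oo[%classic, continuous RT} ->
  {within `[0, +oo[%classic, continuous RP} ->
  {within `[0, +oo[%classic, continuous D} ->
  E 0 = beta0 * cI * cS * LInt `[theta, L]%classic (fun tau => Psi tau * tau) ->
  RT 0 = cI * p * gamma * LInt `[eps, M]%classic (fun rho => Phi rho * rho) ->
  RP 0 = (1 - p) * gamma * cI * LInt `[theta, L]%classic (fun tau => Psi tau * tau) ->
  (forall t : R, 0 < t -> is_derive t 1 S
      (- beta t * I t * S t
       + p * gamma * LInt `[0, +oo[%classic (fun rho => I (t - rho) * Phi rho))) ->
  (forall t : R, 0 < t -> is_derive t 1 E
      (beta t * I t * S t
       - LInt `[0, +oo[%classic
           (fun tau => beta (t - tau) * I (t - tau) * S (t - tau) * Psi tau))) ->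
  (forall t : R, 0 < t -> is_derive t 1 I
      (LInt `[0, +oo[%classic
           (fun tau => beta (t - tau) * I (t - tau) * S (t - tau) * Psi tau)
       - gamma * I t - mu * I t)) ->
  (forall t : R, 0 < t -> is_derive t 1 RT
      (p * gamma * I t
       - p * gamma * LInt `[0, +oo[%classic (fun rho => I (t - rho) * Phi rho))) ->
  (forall t : R, 0 < t -> is_derive t 1 RP ((1 - p) * gamma * I t)) ->
  (forall t : R, 0 < t -> is_derive t 1 D (mu * I t)) ->
  forall t : R, 0 < t ->
    [/\ 0 <= S t, 0 <= E t, 0 <= I t, 0 <= RT t & 0 <= RP t].
Proof.
move=> Psi_supp Phi_supp b_smooth b_ge0 b_hist g0 m0 p0 p1 cS0 cI0 S_hist I_hist
  cSc cIc cE cRT cRP _ E0 RT0 RP0 Sd Ed Id RTd RPd _ t t0.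
have cb : continuous beta.
  by move=> x; apply/differentiable_continuous/derivable1_diffP/(b_smooth 0%N x).
have Psi_ge0 : forall y, 0 <= Psi y by case: Psi_supp.
have Phi_ge0 : forall y, 0 <= Phi y by case: Phi_supp.
have SI := susceptible_infected_gt0 Psi_ge0 Phi_ge0 cb b_ge0 g0 p0 cS0 cI0
  S_hist I_hist cSc cIc Sd Id.
have S_ge0 s : 0 <= S s by case: (SI s) => /ltW.
have I_ge0 s : 0 <= I s by case: (SI s) => _ /ltW.
split => //.
- have cbIS : continuous (fun s => beta s * I s * S s).
    move=> x; apply: (@continuousM _ _ (fun s => beta s * I s) S x _ (cSc x)).
    exact: (@continuousM _ _ beta I x (cb x) (cIc x)).
  apply: (delay_compartment_ge0 (c := 1) (F0 := beta0 * cI * cS) Psi_supp cbIS)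
    => // [s | s s0 | | x x0].
  + by rewrite !mulr_ge0.
  + by rewrite b_hist // I_hist // S_hist.
  + by rewrite E0 mul1r.
  + by rewrite mul1r; exact: Ed.
- apply: (delay_compartment_ge0 (c := p * gamma) (F0 := cI) Phi_supp cIc) => // [| | x x0].
  + by rewrite mulr_ge0.
  + by rewrite RT0; ring.
  + by rewrite mulrBr; exact: RTd.
apply: (is_derive_ge0_ge0 t0 cRP RPd) => [x _|]; first by rewrite !mulr_ge0 ?subr_ge0.
rewrite RP0 !mulr_ge0 ?subr_ge0 ?(ltW cI0) //.
apply: Rintegral_ge0 => y; rewrite /= in_itv /= => /andP[y1 _].
by case: Psi_supp => -[th0 _] _ _ _ _; rewrite mulr_ge0 // (le_trans (ltW th0)).
Qed.
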